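(* Fix an integer $M\ge 1$, $\lambda>0$, $\epsilon>0$, $L_{\max}>0$, a decoding error probability $\delta\in(0,0.5)$ and a channel gain $|h_{ab}|^2>0$. Let $X$ be a random variable that is the sum of $M$ independent exponential random variables each with mean $1/\lambda$ (i.e. $X$ has density $\frac{\lambda^M x^{M-1}e^{-\lambda x}}{(M-1)!}$, $x\ge 0$), and for $P_a>0$ define $$g(P_a)=\mathbb{E}\left[\ln(XP_a+1)-\frac{XP_a}{XP_a+1}\right].$$ For $L_M>0$ and $P_a>0$ let $$R(L_M,P_a)=\log_2\left(1+P_a|h_{ab}|^2\right)-\sqrt{\frac{1}{L_M}\left(1-\frac{1}{(1+P_a|h_{ab}|^2)^2}\right)}\,\frac{Q^{-1}(\delta)}{\ln 2}.$$ Consider the problem of maximizing $L_M\,R(L_M,P_a)(1-\delta)$ over $L_M$ and $P_a$ subject to $L_M\, g(P_a)\le 2\epsilon^2$ and $L_M\le L_{\max}$. Then, for a given $P_a$, the optimal number of channel uses is $$L_M^*=\min\left(L_{\max},\frac{2\epsilon^2}{g(P_a)}\right),$$ and the optimal transmit power $P_a$ is a solution of the one-dimensional problem of maximizing $L_M^*\,R(L_M^*,P_a)(1-\delta)$ over $P_a>0$.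
   Context: $Q^{-1}$ denotes the inverse of the Gaussian Q-function $Q(x)=\frac{1}{\sqrt{2\pi}}\int_x^\infty e^{-t^2/2}dt$. The quantity $L_M\left(\ln(XP_a+1)-\frac{XP_a}{XP_a+1}\right)$ is the Kullback–Leibler divergence between the distributions of $L_M$ i.i.d. observations $\mathcal{CN}(\mathbf{0},\mathbf{I}_M)$ and $\mathcal{CN}(\mathbf{0},P_a\mathbf{h}\mathbf{h}^H+\mathbf{I}_M)$ with $\|\mathbf{h}\|^2=X$, so the constraint $L_M g(P_a)\le 2\epsilon^2$ is the expected-KL covertness constraint; $L_M$ is treated as a continuous variable.
   Formalization: Optimality of $L_M^*$ for a given $P_a$ holds only when $L_M^*R(L_M^*,P_a)(1-\delta)\ge 0$, and the equivalence with the one-dimensional problem is stated only for joint maximizers of positive objective value and one-dimensional solutions of nonnegative value. Apart from conventions, each condition added here is assumed in the paper as well or is needed for the statement above to hold. *)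

From HB Require Import structures.
From mathcomp Require Import all_boot all_order all_algebra.
From mathcomp Require Import all_classical all_reals all_analysis.
Set Implicit Arguments. Unset Strict Implicit. Unset Printing Implicit Defensive.
Import Order.TTheory GRing.Theory Num.Theory Num.Def.
Local Open Scope classical_set_scope.
Local Open Scope ring_scope.

Section covert.
Context {R : realType}.

Definition erlang_pdf (M : nat) (lam x : R) : R :=
  lam ^+ M * x ^+ (M - 1) * expR (- (lam * x)) / ((M - 1)`!)%:R.

Definition gfun (M : nat) (lam P : R) : R :=
  Rintegral lebesgue_measure `[0, +oo[%classic
    (fun x => erlang_pdf M lam x * (ln (x * P + 1) - x * P / (x * P + 1))).

Definition Qfun (x : R) : R :=
  (Num.sqrt (2 * pi))^-1 *
  Rintegral lebesgue_measure `[x, +oo[%classic (fun t => expR (- (t ^+ 2) / 2)).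

Definition log2 (y : R) : R := ln y / ln 2.

(* R(L_M, P_a); qinv stands for Q^{-1}(delta), h for |h_ab|^2 *)
Definition rateR (h qinv L P : R) : R :=
  log2 (1 + P * h)
  - Num.sqrt (L^-1 * (1 - ((1 + P * h) ^+ 2)^-1)) * (qinv / ln 2).

Definition objective (h qinv delta L P : R) : R :=
  L * rateR h qinv L P * (1 - delta).

Definition feasible (M : nat) (lam eps Lmax L P : R) : Prop :=
  0 < L /\ 0 < P /\ L * gfun M lam P <= 2 * eps ^+ 2 /\ L <= Lmax.

Definition Lstar (M : nat) (lam eps Lmax P : R) : R :=
  Num.min Lmax (2 * eps ^+ 2 / gfun M lam P).

End covert.

From HB Require Import structures.
From mathcomp Require Import all_boot all_order all_algebra.
From mathcomp Require Import all_classical all_reals all_analysis.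
From mathcomp Require Import measurable_realfun ring lra.

(* For a fixed power [P], the covertness constraint reads [L <= 2 eps^2 / g(P)],
   which requires [g(P) > 0]. The integrand [ln (1 + y) - y / (1 + y)] is
   nonnegative and at most [y], so it is integrable against the Erlang density,
   and it is bounded away from 0 on [x in [1, 2]], whence [g(P) > 0]. In
   [s = sqrt L] the objective is [a s^2 - b s] with
   [a = (1 - delta) log2 (1 + P h) > 0]; such a quadratic increases wherever
   it is positive, so on the feasible interval (0, L*(P)] it never exceeds
   [max(0, objective at L*(P))], and a positive optimum is attained only at
   [L*(P)]. The joint problem thus reduces to the one-dimensional one in [P]. *)

Set Implicit Arguments.
Unset Strict Implicit.
Unset Printing Implicit Defensive.
Import Order.TTheory GRing.Theory Num.Theory Num.Def.
Local Open Scope ring_scope.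
Local Open Scope classical_set_scope.

Section kl_cgauss.
Context {R : realType}.
Implicit Types P y z : R.

(* The divergence D(CN(0, 1) || CN(0, 1 + y)); the integrand of [gfun] is
   [erlang_pdf M lam x * kl_cgauss (x * P)]. *)
Definition kl_cgauss y : R := ln (y + 1) - y / (y + 1).

Lemma onemV_le_ln z : 0 < z -> 1 - z^-1 <= ln z.
Proof.
move=> z_gt0; have := expR_ge1Dx (- ln z).
by rewrite expRN lnK ?posrE //; lra.
Qed.

Lemma kl_cgauss_ge0 y : 0 <= y -> 0 <= kl_cgauss y.
Proof.
move=> y_ge0; have y1_gt0 : 0 < y + 1 by lra.
rewrite subr_ge0 (_ : y / (y + 1) = 1 - (y + 1)^-1); first exact: onemV_le_ln.
by field; rewrite gt_eqF.
Qed.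

Lemma kl_cgauss_le y : 0 <= y -> kl_cgauss y <= y.
Proof.
move=> y_ge0; have := @le_ln1Dx R y ltac:(lra).
have : 0 <= y / (y + 1) by rewrite divr_ge0 //; lra.
by rewrite /kl_cgauss addrC; lra.
Qed.

(* With [u := (y + 1)^(-1/2)]: [ln (y + 1) = 2 ln u^-1 >= 2 (1 - u)] and
   [y / (y + 1) = 1 - u^2]. *)
Lemma kl_cgauss_ge_sqr y : 0 <= y -> (1 - (Num.sqrt (y + 1))^-1) ^+ 2 <= kl_cgauss y.
Proof.
move=> y_ge0; have y1_gt0 : 0 < y + 1 by lra.
set s := Num.sqrt (y + 1); have s_gt0 : 0 < s by rewrite sqrtr_gt0.
have y1E : y + 1 = s ^+ 2 by rewrite sqr_sqrtr // ltW.
have ln_s := onemV_le_ln s_gt0.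
rewrite /kl_cgauss y1E lnXn // (_ : y = s ^+ 2 - 1); last by lra.
rewrite (_ : (s ^+ 2 - 1) / (s ^+ 2) = 1 - s^-1 ^+ 2); last by field; rewrite gt_eqF.
rewrite -mulr_natl; lra.
Qed.

Lemma kl_cgauss_ge P y : 0 <= P -> P <= y -> (1 - (Num.sqrt (P + 1))^-1) ^+ 2 <= kl_cgauss y.
Proof.
move=> P_ge0 Py; have y_ge0 := le_trans P_ge0 Py.
apply: (le_trans _ (kl_cgauss_ge_sqr y_ge0)).
set sP := Num.sqrt (P + 1); set sy := Num.sqrt (y + 1).
have sP_ge1 : 1 <= sP by rewrite -[X in X <= _]sqrtr1 ler_sqrt; lra.
have sP_le : sP <= sy by rewrite ler_sqrt; lra.
have sPV_le1 : sP^-1 <= 1 by rewrite invf_le1; lra.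
have syV_le : sy^-1 <= sP^-1 by rewrite lef_pV2 ?posrE; lra.
have syV_gt0 : 0 < sy^-1 by rewrite invr_gt0; lra.
by rewrite ler_sqr ?nnegrE; lra.
Qed.

(* [(y + 1)^-1 = expR (- ln (y + 1))] avoids measurability of inversion. *)
Lemma kl_cgauss_expR y : -1 < y -> kl_cgauss y = ln (y + 1) - 1 + expR (- ln (y + 1)).
Proof.
move=> y_gtN1; have y1_gt0 : 0 < y + 1 by lra.
by rewrite /kl_cgauss expRN lnK ?posrE //; field; rewrite gt_eqF.
Qed.

Lemma measurable_kl_cgauss_scale P : 0 <= P ->
  measurable_fun (`[0, +oo[ : set R) (fun x => kl_cgauss (x * P)).
Proof.
move=> P_ge0.
apply: (eq_measurable_fun (fun x : R => ln (x * P + 1) - 1 + expR (- ln (x * P + 1)))).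
  move=> x; rewrite inE /= in_itv /= andbT => x_ge0.
  by rewrite kl_cgauss_expR // (lt_le_trans _ (mulr_ge0 x_ge0 P_ge0)) ?ltrN10.
apply: measurable_funTS.
have mln : measurable_fun [set: R] (fun x => ln (x * P + 1)).
  apply: measurableT_comp => //; apply: measurable_funD => //.
  exact: measurable_funM.
apply: measurable_funD; first exact: measurable_funB.
exact/measurableT_comp/measurable_funN.
Qed.

End kl_cgauss.

Section erlang.
Context {R : realType}.
Implicit Types lam x b : R.

Lemma exprS_le_fact_expR x n : 0 <= x -> x ^+ n.+1 <= (n.+1)`!%:R * expR x.
Proof.
move=> x_ge0; rewrite mulrC -ler_pdivrMr ?ltr0n ?fact_gt0 //.
by apply: le_trans (expR_ge1Dxn n x_ge0); rewrite lerDr.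
Qed.

Lemma erlang_pdf_ge0 M lam x : 0 < lam -> 0 <= x -> 0 <= erlang_pdf M lam x.
Proof.
move=> lam_gt0 x_ge0; rewrite /erlang_pdf divr_ge0 //.
by rewrite !mulr_ge0 ?exprn_ge0 ?expR_ge0 // ltW.
Qed.

Lemma erlang_pdf_ge M lam b x : 0 < lam -> 1 <= x -> x <= b ->
  lam ^+ M * expR (- (lam * b)) / ((M - 1)`!)%:R <= erlang_pdf M lam x.
Proof.
move=> lam_gt0 x_ge1 xb; rewrite /erlang_pdf ler_pM2r ?invr_gt0 ?ltr0n ?fact_gt0 //.
rewrite -mulrA ler_pM2l ?exprn_gt0 // -[X in X <= _]mul1r.
rewrite ler_pM ?expR_ge0 ?exprn_ege1 //.
by rewrite ler_expR lerN2 ler_pM2l.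
Qed.

Lemma measurable_erlang_pdf M lam : measurable_fun [set: R] (erlang_pdf M lam).
Proof.
apply: measurable_funM => //; apply: measurable_funM.
  exact: measurable_funM.
exact/measurableT_comp/measurable_funN/measurable_funM.
Qed.

(* [(lam x / 2)^(n+1) <= (n+1)! e^(lam x / 2)] trades the polynomial factor
   for half of the exponential decay. *)
Lemma erlang_pdf_mulr_le n lam x : 0 < lam -> 0 <= x ->
  erlang_pdf n.+1 lam x * x <= 2 ^+ n.+2 * n.+1%:R / lam * exponential_pdf (lam / 2) x.
Proof.
move=> lam_gt0 x_ge0; set y := lam * x / 2.
have y_ge0 : 0 <= y by rewrite divr_ge0 // mulr_ge0 // ltW.
have n_fact_gt0 : 0 < n`!%:R :> R by rewrite ltr0n fact_gt0.
have c_ge0 : 0 <= 2 ^+ n.+1 * expR (- (lam * x)) / n`!%:R.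
  by rewrite divr_ge0 ?mulr_ge0 ?exprn_ge0 ?expR_ge0 // ltW.
rewrite exponential_pdfE // /erlang_pdf subn1 /=.
have -> : lam ^+ n.+1 * x ^+ n * expR (- (lam * x)) / n`!%:R * x
    = 2 ^+ n.+1 * expR (- (lam * x)) / n`!%:R * y ^+ n.+1.
  rewrite /y expr_div_n exprMn !exprS; field.
  by rewrite !gt_eqF ?exprn_gt0.
have -> : 2 ^+ n.+2 * n.+1%:R / lam * (lam / 2 * expR (- (lam / 2) * x))
    = 2 ^+ n.+1 * expR (- (lam * x)) / n`!%:R * ((n.+1)`!%:R * expR y).
  have -> : expR (- (lam / 2) * x) = expR (- (lam * x)) * expR y.
    by rewrite -expRD /y; congr expR; field.
  rewrite factS natrM !exprS; field.
  by rewrite !gt_eqF ?exprn_gt0.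
exact: (ler_wpM2l c_ge0 (exprS_le_fact_expR n y_ge0)).
Qed.

End erlang.

Section positive_integral.
Context d (T : measurableType d) (R : realType) (mu : {measure set T -> \bar R}).

Lemma Rintegral_gt0 (A D : set T) (f : T -> R) (c : R) :
  measurable A -> measurable D -> A `<=` D ->
  mu.-integrable D (EFin \o f) -> (forall x, D x -> 0 <= f x) ->
  0 < c -> (0 < mu A)%E -> (forall x, A x -> c <= f x) ->
  0 < Rintegral mu D f.
Proof.
move=> mA mD AD intf f_ge0 c_gt0 muA_gt0 cf.
have mf := measurable_int mu intf.
have lb : (c%:E * mu A <= \int[mu]_(x in D) (f x)%:E)%E.
  rewrite -integral_cst //; apply: (@le_trans _ _ (\int[mu]_(x in A) (f x)%:E)%E).
    apply: ge0_le_integral => //; first by move=> x _; rewrite lee_fin ltW.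
    exact: measurable_funS mf.
  by apply: ge0_subset_integral => // x Dx; rewrite lee_fin f_ge0.
rewrite /Rintegral fine_gt0 // (lt_le_trans _ lb) ?mule_gt0 ?lte_fin //=.
by rewrite -ge0_fin_numE ?integrable_fin_num // (le_trans _ lb) // ltW ?mule_gt0 ?lte_fin.
Qed.

End positive_integral.

Section gfun.
Context {R : realType}.
Implicit Types lam P : R.

Lemma integrable_erlang_kl n lam P : 0 < lam -> 0 <= P ->
  lebesgue_measure.-integrable (`[0, +oo[ : set R)
    (EFin \o fun x => erlang_pdf n.+1 lam x * kl_cgauss (x * P)).
Proof.
move=> lam_gt0 P_ge0; have lam2_gt0 : 0 < lam / 2 by rewrite divr_gt0.
set k := P * (2 ^+ n.+2 * n.+1%:R / lam).
have int_exp : lebesgue_measure.-integrable (`[0, +oo[ : set R)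
    (EFin \o fun x => k * exponential_pdf (lam / 2) x).
  apply: (integrableS (E := setT)) => //.
  by have := integrableZl measurableT k (integrable_exponential_pdf lam2_gt0).
apply: le_integrable int_exp => //.
- apply/measurable_EFinP/measurable_funM; last exact: measurable_kl_cgauss_scale.
  by apply: measurable_funTS; exact: measurable_erlang_pdf.
move=> x; rewrite /= in_itv /= andbT => x_ge0.
have xP_ge0 : 0 <= x * P by rewrite mulr_ge0.
have f_ge0 := mulr_ge0 (erlang_pdf_ge0 n.+1 lam_gt0 x_ge0) (kl_cgauss_ge0 xP_ge0).
rewrite lee_fin ger0_norm //.
apply: le_trans (ler_norm _); rewrite /k -mulrA.
apply: (@le_trans _ _ (P * (erlang_pdf n.+1 lam x * x))).
  rewrite mulrCA [P * x]mulrC.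
  exact: (ler_wpM2l (erlang_pdf_ge0 _ lam_gt0 x_ge0) (kl_cgauss_le xP_ge0)).
exact: (ler_wpM2l P_ge0 (erlang_pdf_mulr_le n lam_gt0 x_ge0)).
Qed.

Lemma gfun_gt0 M lam P : (0 < M)%N -> 0 < lam -> 0 < P -> 0 < gfun M lam P.
Proof.
case: M => // n _ lam_gt0 P_gt0.
set erlang_lb := lam ^+ n.+1 * expR (- (lam * 2)) / n`!%:R.
set kl_lb := (1 - (Num.sqrt (P + 1))^-1) ^+ 2.
have erlang_lb_gt0 : 0 < erlang_lb.
  by rewrite divr_gt0 ?ltr0n ?fact_gt0 // mulr_gt0 ?exprn_gt0 ?expR_gt0.
have kl_lb_gt0 : 0 < kl_lb.
  have sqrt_gt1 : 1 < Num.sqrt (P + 1) by rewrite -[X in X < _]sqrtr1 ltr_sqrt; lra.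
  by rewrite exprn_gt0 // subr_gt0 invf_lt1 // (lt_trans ltr01).
have itv12_gt0 : (0 < lebesgue_measure (`[1%R, 2%R]%classic : set R))%E.
  by rewrite lebesgue_measure_itv /= lte_fin ltr1n -EFinD lte_fin; lra.
rewrite /gfun.
apply: (@Rintegral_gt0 _ _ _ lebesgue_measure `[1, 2]%classic _ _ (erlang_lb * kl_lb)) => //.
- by move=> x; rewrite /= !in_itv /= !andbT => /andP[/(le_trans ler01)].
- exact/integrable_erlang_kl/ltW.
- move=> x; rewrite /= in_itv /= andbT => x_ge0.
  by rewrite mulr_ge0 ?erlang_pdf_ge0 ?kl_cgauss_ge0 // mulr_ge0 // ltW.
- exact: mulr_gt0.
move=> x; rewrite /= in_itv /= => /andP[x_ge1 x_le2].
apply: ler_pM; [exact: ltW | exact: ltW | |].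
- by have := erlang_pdf_ge n.+1 lam_gt0 x_ge1 x_le2; rewrite subn1.
- apply: kl_cgauss_ge; first exact: ltW.
  by rewrite -[X in X <= _]mul1r ler_pM2r.
Qed.

End gfun.

Section quadratic.
Context {R : realFieldType}.
Variables (a b : R).
Hypothesis a_gt0 : 0 < a.

Lemma quadratic_lt s t : 0 < s -> s < t -> 0 < a * s ^+ 2 - b * s ->
  a * s ^+ 2 - b * s < a * t ^+ 2 - b * t.
Proof.
move=> s_gt0 st qs_gt0.
have b_lt : b < a * s by rewrite -(ltr_pM2r s_gt0); move: qs_gt0; rewrite expr2; lra.
suff : 0 < (t - s) * (a * (t + s) - b) by rewrite !expr2; nra.
have at_gt0 : 0 < a * t by rewrite mulr_gt0 // (lt_trans s_gt0 st).
by apply: mulr_gt0; lra.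
Qed.

Lemma quadratic_le_max0 s t : 0 < s -> s <= t ->
  a * s ^+ 2 - b * s <= Num.max 0 (a * t ^+ 2 - b * t).
Proof.
move=> s_gt0; rewrite le_eqVlt => /predU1P[<- | st]; first by rewrite le_max lexx orbT.
have [qs_le0 | qs_gt0] := lerP (a * s ^+ 2 - b * s) 0.
  by rewrite le_max qs_le0.
by rewrite le_max (ltW (quadratic_lt s_gt0 st qs_gt0)) orbT.
Qed.

End quadratic.

Section objective.
Context {R : realType}.
Implicit Types h qinv delta L P y : R.

Lemma log2_gt0 y : 1 < y -> 0 < log2 y.
Proof. by move=> y_gt1; rewrite /log2 divr_gt0 ?ln_gt0 ?ltr1n. Qed.

Lemma objectiveE h qinv delta L P : 0 < L ->
  objective h qinv delta L P =
    (1 - delta) * log2 (1 + P * h) * Num.sqrt L ^+ 2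
    - (1 - delta) * (Num.sqrt (1 - ((1 + P * h) ^+ 2)^-1) * (qinv / ln 2)) * Num.sqrt L.
Proof.
move=> L_gt0; have sL_gt0 : 0 < Num.sqrt L by rewrite sqrtr_gt0.
rewrite /objective /rateR sqrtrM ?invr_ge0 ?ltW // sqrtrV ?ltW //.
rewrite -[X in X * _ * _](sqr_sqrtr (ltW L_gt0)).
by field; rewrite !gt_eqF // ln_gt0 // ltr1n.
Qed.

Section fixed_power.
Variables (h qinv delta P : R).
Hypotheses (P_gt0 : 0 < P) (h_gt0 : 0 < h) (delta_lt1 : delta < 1).

Let a_gt0 : 0 < (1 - delta) * log2 (1 + P * h).
Proof. by rewrite mulr_gt0 ?subr_gt0 ?log2_gt0 // ltrDl mulr_gt0. Qed.

Lemma objective_le_max0 L L' : 0 < L -> L <= L' ->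
  objective h qinv delta L P <= Num.max 0 (objective h qinv delta L' P).
Proof.
move=> L_gt0 LL'; have L'_gt0 := lt_le_trans L_gt0 LL'.
rewrite !objectiveE //.
by apply: quadratic_le_max0; [exact: a_gt0 | rewrite sqrtr_gt0 | rewrite ler_sqrt // ltW].
Qed.

Lemma objective_lt L L' : 0 < L -> L < L' -> 0 < objective h qinv delta L P ->
  objective h qinv delta L P < objective h qinv delta L' P.
Proof.
move=> L_gt0 LL'; have L'_gt0 := lt_trans L_gt0 LL'.
rewrite !objectiveE //.
by apply: quadratic_lt; [exact: a_gt0 | rewrite sqrtr_gt0 | rewrite ltr_sqrt].
Qed.

End fixed_power.
End objective.

Section optimal_length.
Context {R : realType}.
Variables (M : nat) (lam eps Lmax : R).
Hypotheses (M_gt0 : (0 < M)%N) (lam_gt0 : 0 < lam).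
Hypotheses (eps_gt0 : 0 < eps) (Lmax_gt0 : 0 < Lmax).

Local Notation feas := (feasible M lam eps Lmax).
Local Notation Ls := (Lstar M lam eps Lmax).

Lemma Lstar_feasible P : 0 < P -> feas (Ls P) P.
Proof.
move=> P_gt0; have g_gt0 := gfun_gt0 M_gt0 lam_gt0 P_gt0.
have bound_gt0 : 0 < 2 * eps ^+ 2 / gfun M lam P.
  by rewrite divr_gt0 // mulr_gt0 // exprn_gt0.
split; first by rewrite lt_min Lmax_gt0.
split=> //; split; last by rewrite ge_min lexx.
by rewrite -ler_pdivlMr // ge_min lexx orbT.
Qed.

Lemma feasible_le_Lstar L P : feas L P -> L <= Ls P.
Proof.
move=> [_ [P_gt0 [Lg LLmax]]]; have g_gt0 := gfun_gt0 M_gt0 lam_gt0 P_gt0.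
by rewrite le_min LLmax ler_pdivlMr.
Qed.

Lemma objective_le_Lstar h qinv delta L P : 0 < h -> delta < 1 -> feas L P ->
  objective h qinv delta L P <= Num.max 0 (objective h qinv delta (Ls P) P).
Proof.
move=> h_gt0 delta_lt1 feasLP; have [L_gt0 [P_gt0 _]] := feasLP.
exact: objective_le_max0 L_gt0 (feasible_le_Lstar feasLP).
Qed.

End optimal_length.

Theorem proposition1 (R : realType) (M : nat) (lam eps Lmax delta h qinv : R) :
  (1 <= M)%N -> 0 < lam -> 0 < eps -> 0 < Lmax ->
  0 < delta -> delta < 1 / 2 -> 0 < h ->
  Qfun qinv = delta ->
  let obj := objective h qinv delta in
  let feas := feasible M lam eps Lmax in
  let Ls := Lstar M lam eps Lmax in
  (* for a given P_a, L_M^* is feasible and optimal *)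
  (forall P, 0 < P ->
     feas (Ls P) P /\
     (0 <= obj (Ls P) P -> forall L, feas L P -> obj L P <= obj (Ls P) P)) /\
  (* any (positive-value) joint optimum has L_M = L_M^*(P_a), with P_a solving
     the one-dimensional problem *)
  (forall L0 P0, feas L0 P0 -> 0 < obj L0 P0 ->
     (forall L P, feas L P -> obj L P <= obj L0 P0) ->
     L0 = Ls P0 /\ (forall P, 0 < P -> obj (Ls P) P <= obj (Ls P0) P0)) /\
  (* conversely, a solution of the one-dimensional problem yields a joint optimum *)
  (forall P0, 0 < P0 -> 0 <= obj (Ls P0) P0 ->
     (forall P, 0 < P -> obj (Ls P) P <= obj (Ls P0) P0) ->
     forall L P, feas L P -> obj L P <= obj (Ls P0) P0).
Proof.
move=> M_gt0 lam_gt0 eps_gt0 Lmax_gt0 _ delta_lt_half h_gt0 _ obj feas Ls.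
have delta_lt1 : delta < 1 by lra.
have feasLs P : 0 < P -> feas (Ls P) P by exact: Lstar_feasible.
have obj_le L P : feas L P -> obj L P <= Num.max 0 (obj (Ls P) P).
  exact: objective_le_Lstar.
split; [|split].
- move=> P P_gt0; split; first exact: feasLs.
  by move=> obj_ge0 L /obj_le; rewrite max_r.
- move=> L0 P0 feas0 obj0_gt0 opt.
  have [L0_gt0 [P0_gt0 _]] := feas0.
  have L0E : L0 = Ls P0.
    apply/eqP; rewrite eq_le feasible_le_Lstar //= leNgt; apply/negP => lt_L0.
    have := objective_lt P0_gt0 h_gt0 delta_lt1 L0_gt0 lt_L0 obj0_gt0.
    by rewrite ltNge (opt _ _ (feasLs _ P0_gt0)).
  by split=> // P P_gt0; rewrite -L0E; apply/opt/feasLs.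
- move=> P0 P0_gt0 obj0_ge0 opt L P feasLP.
  apply: le_trans (obj_le _ _ feasLP) _.
  by rewrite ge_max obj0_ge0 opt //; case: feasLP => _ [].
Qed.
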